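(* Let $G=(V,E)$ be a hypergraph, let $(Y_1,Y_2,W,Z)$ be a partition of $V$, and let $A_1:=Y_1\cup W$ and $A_2:=Y_2\cup W$. Then \[d(A_1)+d(A_2)=\sigma(Y_1,Y_2,W,Z).\]
   Context: A hypergraph $G=(V,E)$ has finite vertex set $V$ and finite multiset $E$ of hyperedges (subsets of $V$). For $X\subseteq V$, $d(X)$ is the number of hyperedges meeting both $X$ and $V\setminus X$. For a partition $(Y_1,\dots,Y_p,W,Z)$ of $V$: $\mathrm{cost}(Y_1,\dots,Y_p,W,Z)$ is the number of hyperedges meeting at least two of its parts; $\mathrm{cost}(W,Z)$ is the number of hyperedges $e$ with $e\subseteq W\cup Z$, $e\cap W\ne\emptyset$, $e\cap Z\neq\emptyset$; $\alpha(Y_1,\dots,Y_p,W,Z)$ is the number of hyperedges that meet $Z$ and meet at least two of the sets $Y_1,\dots,Y_p,W$; $\beta(Y_1,\dots,Y_p,Z)$ is the number of hyperedges disjoint from $Z$ that meet at least two of $Y_1,\dots,Y_p$; and $\sigma(Y_1,\dots,Y_p,W,Z):=\mathrm{cost}(Y_1,\dots,Y_p,W,Z)+\mathrm{cost}(W,Z)+\alpha(Y_1,\dots,Y_p,W,Z)+\beta(Y_1,\dots,Y_p,Z)$. *)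

From mathcomp Require Import all_boot.
Set Implicit Arguments. Unset Strict Implicit. Unset Printing Implicit Defensive.

(* A hypergraph on a finite vertex type V: the hyperedges form a finite
   multiset, represented as a sequence of subsets of V. *)
Section Hyper.
Variable V : finType.
Implicit Types (E : seq {set V}) (X Y W Z e : {set V}) (Ys : seq {set V}).

Definition meets e X : bool := e :&: X != set0.

Definition nmeet e (P : seq {set V}) : nat := count (meets e) P.

Definition dcut E X : nat := count (fun e => meets e X && meets e (~: X)) E.

Definition cost E (P : seq {set V}) : nat := count (fun e => 2 <= nmeet e P) E.

Definition cost2 E W Z : nat :=
  count (fun e => [&& e \subset W :|: Z, meets e W & meets e Z]) E.

Definition alpha E Ys W Z : nat :=
  count (fun e => meets e Z && (2 <= nmeet e (rcons Ys W))) E.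

Definition beta E Ys Z : nat :=
  count (fun e => ~~ meets e Z && (2 <= nmeet e Ys)) E.

Definition sigma E Ys W Z : nat :=
  cost E (Ys ++ [:: W; Z]) + cost2 E W Z + alpha E Ys W Z + beta E Ys Z.

End Hyper.

From mathcomp Require Import all_boot.

(* Both sides count hyperedges with multiplicity, so it suffices to compare
   the contribution of a single hyperedge e.  Write y1, y2, w, z for
   "e meets Y1, Y2, W, Z".  The complements of A1 and A2 are Y2 :|: Z and
   Y1 :|: Z, so e contributes
     ((y1 || w) && (y2 || z)) + ((y2 || w) && (y1 || z))
   to the left-hand side, and e \subset W :|: Z means ~~ (y1 || y2); a truth
   table over the sixteen cases then matches the four counts defining sigma. *)

Lemma count_sum (T : Type) (a : pred T) (s : seq T) :
  count a s = \sum_(x <- s) a x.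
Proof. by elim: s => [|x s IHs]; rewrite ?big_nil ?big_cons //= IHs. Qed.

Lemma edge_contribution (y1 y2 w z : bool) :
  ((y1 || w) && (y2 || z)) + ((y2 || w) && (y1 || z)) =
  (1 < y1 + (y2 + (w + (z + 0)))) + [&& ~~ (y1 || y2), w & z] +
  (z && (1 < y1 + (y2 + (w + 0)))) + (~~ z && (1 < y1 + (y2 + 0))).
Proof. by case: y1; case: y2; case: w; case: z. Qed.

Section Sets.
Variable V : finType.
Implicit Types e A B C X Y : {set V}.

Lemma meetsU e A B : meets e (A :|: B) = meets e A || meets e B.
Proof. by rewrite /meets setIUr setU_eq0 negb_and. Qed.

Lemma subset_meetsC e A : (e \subset A) = ~~ meets e (~: A).
Proof. by rewrite /meets -setDE setD_eq0 negbK. Qed.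

Lemma disjointsU A B C :
  [disjoint A :|: B & C] = [disjoint A & C] && [disjoint B & C].
Proof. by rewrite !disjoints_subset subUset. Qed.

Lemma disjointsUr A B C :
  [disjoint A & B :|: C] = [disjoint A & B] && [disjoint A & C].
Proof. by rewrite disjoint_sym disjointsU !(disjoint_sym _ A). Qed.

Lemma setC_disjoint_cover X Y :
  X :|: Y = setT -> [disjoint X & Y] -> ~: X = Y.
Proof.
move=> cover dXY; apply/setP => x; rewrite inE.
have := in_setT x; rewrite -cover inE.
by case: (boolP (x \in X)) => [/(disjointFr dXY) -> | _ /= ->].
Qed.

End Sets.

Section FourBlocks.
Variables (V : finType) (Y1 Y2 W Z : {set V}).
Hypothesis cover : Y1 :|: Y2 :|: W :|: Z = [set: V].
Hypotheses (d12 : [disjoint Y1 & Y2]) (d1w : [disjoint Y1 & W])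
  (d1z : [disjoint Y1 & Z]) (d2w : [disjoint Y2 & W])
  (d2z : [disjoint Y2 & Z]) (dwz : [disjoint W & Z]).

Lemma setC_Y1W : ~: (Y1 :|: W) = Y2 :|: Z.
Proof.
apply: setC_disjoint_cover; first by rewrite setUACA setUA.
by rewrite disjointsU !disjointsUr d12 d1z (disjoint_sym W) d2w dwz.
Qed.

Lemma setC_Y2W : ~: (Y2 :|: W) = Y1 :|: Z.
Proof.
apply: setC_disjoint_cover; first by rewrite setUACA (setUC Y2) setUA.
by rewrite disjointsU !disjointsUr (disjoint_sym Y2) d12 d2z (disjoint_sym W)
  d1w dwz.
Qed.

Lemma setC_WZ : ~: (W :|: Z) = Y1 :|: Y2.
Proof.
apply: setC_disjoint_cover; first by rewrite setUC setUA.
by rewrite disjointsU !disjointsUr !(disjoint_sym W) !(disjoint_sym Z)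
  d1w d2w d1z d2z.
Qed.

Lemma dcut_pair_edge e :
  (meets e (Y1 :|: W) && meets e (~: (Y1 :|: W))) +
  (meets e (Y2 :|: W) && meets e (~: (Y2 :|: W))) =
  (1 < nmeet e ([:: Y1; Y2] ++ [:: W; Z])) +
  [&& e \subset W :|: Z, meets e W & meets e Z] +
  (meets e Z && (1 < nmeet e (rcons [:: Y1; Y2] W))) +
  (~~ meets e Z && (1 < nmeet e [:: Y1; Y2])).
Proof.
rewrite setC_Y1W setC_Y2W subset_meetsC setC_WZ !meetsU /nmeet /=.
exact: edge_contribution.
Qed.

End FourBlocks.

Theorem proposition3p2 (V : finType) (E : seq {set V}) (Y1 Y2 W Z : {set V}) :
  Y1 :|: Y2 :|: W :|: Z = [set: V] ->
  [disjoint Y1 & Y2] -> [disjoint Y1 & W] -> [disjoint Y1 & Z] ->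
  [disjoint Y2 & W] -> [disjoint Y2 & Z] -> [disjoint W & Z] ->
  dcut E (Y1 :|: W) + dcut E (Y2 :|: W) = sigma E [:: Y1; Y2] W Z.
Proof.
move=> cover d12 d1w d1z d2w d2z dwz.
rewrite /sigma /dcut /cost /cost2 /alpha /beta !count_sum -!big_split.
by apply: eq_bigr => e _; exact: dcut_pair_edge.
Qed.
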